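(* Full Modal Team Logic $\mathcal{FMTL}$ enjoys uniform interpolation: for every formula $\phi\in\mathcal{FMTL}$ and every $\mathcal L'\subseteq\mathcal L(\phi)$ there is $\theta\in\mathcal{FMTL}$ with $\phi\models\theta$, $\mathcal L(\theta)\subseteq\mathcal L'$, and $\theta\models\psi$ for every $\psi\in\mathcal{FMTL}$ such that $\phi\models\psi$ and $\mathcal L(\phi)\cap\mathcal L(\psi)\subseteq\mathcal L'$.
   Context: Kripke models $M=(W,R,V)$, $V:W\to\mathcal P(Prop)$; team models $(M,X)$, $X\subseteq W$. Formulas of $\mathcal{FMTL}$: $p,\neg p,\bot,NE,\wedge,\otimes,\vee,\Diamond,\Box$, with team semantics: $(M,X)\models p$ iff $p\in V(s)$ for all $s\in X$; $\neg p$ iff $p\notin V(s)$ for all $s\in X$; $\bot$ iff $X=\emptyset$; $NE$ iff $X\neq\emptyset$; $\wedge$ componentwise; $\vee$: one disjunct holds; $\otimes$: $X=X_1\cup X_2$ with $(M,X_i)\models\phi_i$; $\Diamond\phi$: $(M,Y)\models\phi$ for some $Y$ such that every $x\in X$ has an $R$-successor in $Y$ and every $y\in Y$ is a successor of some $x\in X$; $\Box\phi$: $(M,R[X])\models\phi$, $R[X]$ the set of successors of elements of $X$. $\mathcal L(\phi)$ is the set of letters in $\phi$; $\phi\models\psi$ means every team model of $\phi$ satisfies $\psi$. *)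

Definition letter := nat.

Inductive form : Type :=
| FAtom  : letter -> form
| FNAtom : letter -> form
| FBot   : form
| FNE    : form
| FAnd   : form -> form -> form
| FTensor : form -> form -> form
| FOr    : form -> form -> form
| FDia   : form -> form
| FBox   : form -> form.

Record kmodel : Type := KModel {
  world : Type;
  rel : world -> world -> Prop;
  val : world -> letter -> Prop
}.

Fixpoint sat (M : kmodel) (phi : form) (X : world M -> Prop) : Prop :=
  match phi with
  | FAtom p => forall s, X s -> val M s p
  | FNAtom p => forall s, X s -> ~ val M s p
  | FBot => forall s, ~ X s
  | FNE => exists s, X s
  | FAnd a b => sat M a X /\ sat M b X
  | FTensor a b => exists X1 X2 : world M -> Prop,
      (forall s, X s <-> (X1 s \/ X2 s)) /\ sat M a X1 /\ sat M b X2
  | FOr a b => sat M a X \/ sat M b X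
  | FDia a => exists Y : world M -> Prop,
      (forall x, X x -> exists y, rel M x y /\ Y y) /\
      (forall y, Y y -> exists x, X x /\ rel M x y) /\
      sat M a Y
  | FBox a => sat M a (fun y => exists x, X x /\ rel M x y)
  end.

Definition entails (phi psi : form) : Prop :=
  forall (M : kmodel) (X : world M -> Prop), sat M phi X -> sat M psi X.

Fixpoint letters (phi : form) (q : letter) : Prop :=
  match phi with
  | FAtom p | FNAtom p => p = q
  | FBot | FNE => False
  | FAnd a b | FTensor a b | FOr a b => letters a q \/ letters b q
  | FDia a | FBox a => letters a q
  end.

(* Let d be the modal depth of phi.  Formulas of depth at most d are invariant
   under d-bisimilarity of teams, lifted from d-bisimilarity of worlds.  Over
   the finite set L' there are finitely many flat characteristic formulas
   ("types") of depth d, and two teams are d-bisimilar over L' as soon as they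
   realize the same set of types.  The interpolant is the disjunction, over the
   sets S of types realized by some team satisfying phi, of the formula "the
   team realizes exactly S".  Given a team X of M that
   realizes S and a team X' of M' that satisfies phi and realizes S, amalgamate
   M and M' along the type relation, reading the letters of phi from M' and all
   other letters from M: the amalgam is d-bisimilar to M' over L(phi) and to M
   over L(psi), so phi transfers from X' to the amalgam, psi holds there, and
   psi transfers back to X. *)

From Stdlib Require Import List Classical Lia.
Import ListNotations.

Fixpoint depth (f : form) : nat :=
  match f with
  | FAnd a b | FTensor a b | FOr a b => Nat.max (depth a) (depth b)
  | FDia a | FBox a => S (depth a)
  | _ => 0
  end.

Record graded_bisim (M1 M2 : kmodel) (P : letter -> Prop)
    (B : nat -> world M1 -> world M2 -> Prop) : Prop := {
  graded_bisim_val : forall n x y p, B n x y -> P p -> (val M1 x p <-> val M2 y p);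
  graded_bisim_forth : forall n x y x', B (S n) x y -> rel M1 x x' ->
    exists y', rel M2 y y' /\ B n x' y';
  graded_bisim_back : forall n x y y', B (S n) x y -> rel M2 y y' ->
    exists x', rel M1 x x' /\ B n x' y'
}.

Arguments graded_bisim_val {M1 M2 P B} _ {n x y p}.
Arguments graded_bisim_forth {M1 M2 P B} _ {n x y x'}.
Arguments graded_bisim_back {M1 M2 P B} _ {n x y y'}.

Definition team_bisim {M1 M2 : kmodel} (B : nat -> world M1 -> world M2 -> Prop)
    (n : nat) (X1 : world M1 -> Prop) (X2 : world M2 -> Prop) : Prop :=
  (forall x, X1 x -> exists y, X2 y /\ B n x y) /\
  (forall y, X2 y -> exists x, X1 x /\ B n x y).

Definition post (M : kmodel) (X : world M -> Prop) : world M -> Prop :=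
  fun y => exists x, X x /\ rel M x y.

Set Implicit Arguments.
Unset Strict Implicit.

Section TeamBisimulation.

Variables (M1 M2 : kmodel) (P : letter -> Prop) (B : nat -> world M1 -> world M2 -> Prop).
Hypothesis HB : graded_bisim M1 M2 P B.

Lemma team_bisim_restrict n X1 X2 (A1 : world M1 -> Prop) :
  team_bisim B n X1 X2 -> (forall x, A1 x -> X1 x) ->
  team_bisim B n A1 (fun y => X2 y /\ exists x, A1 x /\ B n x y).
Proof.
  intros [HX1 _] HA. split.
  - intros x Hx. destruct (HX1 x (HA x Hx)) as [y [Hy Hxy]]. eauto 6.
  - intros y [_ [x [Hx Hxy]]]. eauto.
Qed.

Lemma team_bisim_post n X1 X2 :
  team_bisim B (S n) X1 X2 -> team_bisim B n (post M1 X1) (post M2 X2).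
Proof.
  intros [HX1 HX2]. split.
  - intros x' [x [Hx Hxx']]. destruct (HX1 x Hx) as [y [Hy Hxy]].
    destruct (graded_bisim_forth HB Hxy Hxx') as [y' [Hyy' Hxy']].
    exists y'. split; [exists y|]; auto.
  - intros y' [y [Hy Hyy']]. destruct (HX2 y Hy) as [x [Hx Hxy]].
    destruct (graded_bisim_back HB Hxy Hyy') as [x' [Hxx' Hxy']].
    exists x'. split; [exists x|]; auto.
Qed.

Lemma team_bisim_dia n X1 X2 (Y1 : world M1 -> Prop) :
  team_bisim B (S n) X1 X2 ->
  (forall x, X1 x -> exists y, rel M1 x y /\ Y1 y) ->
  (forall y, Y1 y -> exists x, X1 x /\ rel M1 x y) ->
  exists Y2 : world M2 -> Prop,
    (forall x, X2 x -> exists y, rel M2 x y /\ Y2 y) /\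
    (forall y, Y2 y -> exists x, X2 x /\ rel M2 x y) /\
    team_bisim B n Y1 Y2.
Proof.
  intros [HX1 HX2] Hsucc Hpred.
  exists (fun y' => post M2 X2 y' /\ exists x', Y1 x' /\ B n x' y').
  split; [|split; [|split]].
  - intros y Hy. destruct (HX2 y Hy) as [x [Hx Hxy]].
    destruct (Hsucc x Hx) as [x' [Hxx' Hx']].
    destruct (graded_bisim_forth HB Hxy Hxx') as [y' [Hyy' Hxy']].
    exists y'. split; [|split; [exists y|exists x']]; auto.
  - intros y' [[y [Hy Hyy']] _]. eauto.
  - intros x' Hx'. destruct (Hpred x' Hx') as [x [Hx Hxx']].
    destruct (HX1 x Hx) as [y [Hy Hxy]].
    destruct (graded_bisim_forth HB Hxy Hxx') as [y' [Hyy' Hxy']].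
    exists y'. split; [split; [exists y|exists x']|]; auto.
  - intros y' [_ [x' [Hx' Hxy']]]. eauto.
Qed.

Lemma sat_team_bisim phi : (forall q, letters phi q -> P q) ->
  forall n X1 X2, depth phi <= n -> team_bisim B n X1 X2 -> sat M1 phi X1 -> sat M2 phi X2.
Proof.
  induction phi as [p|p| | |a IHa b IHb|a IHa b IHb|a IHa b IHb|a IH|a IH];
    intros HP n X1 X2 Hn HX; pose proof HX as [HX1 HX2]; simpl in HP, Hn |- *.
  - intros Hsat y Hy. destruct (HX2 y Hy) as [x [Hx Hxy]].
    apply (graded_bisim_val HB Hxy (HP p eq_refl)). auto.
  - intros Hsat y Hy. destruct (HX2 y Hy) as [x [Hx Hxy]].
    rewrite <- (graded_bisim_val HB Hxy (HP p eq_refl)). auto.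
  - intros Hsat y Hy. destruct (HX2 y Hy) as [x [Hx _]]. exact (Hsat x Hx).
  - intros [x Hx]. destruct (HX1 x Hx) as [y [Hy _]]. eauto.
  - intros [Ha Hb]. split.
    + apply (IHa (fun q Hq => HP q (or_introl Hq)) n X1); auto; lia.
    + apply (IHb (fun q Hq => HP q (or_intror Hq)) n X1); auto; lia.
  - intros (A1 & B1 & Hsplit & Ha & Hb).
    exists (fun y => X2 y /\ exists x, A1 x /\ B n x y),
           (fun y => X2 y /\ exists x, B1 x /\ B n x y).
    split; [|split].
    + intros y. split.
      * intros Hy. destruct (HX2 y Hy) as [x [Hx Hxy]].
        apply Hsplit in Hx as [Hx|Hx]; [left|right]; eauto.
      * intros [[Hy _]|[Hy _]]; exact Hy.
    + apply (IHa (fun q Hq => HP q (or_introl Hq)) n A1); auto; [lia|].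
      apply (team_bisim_restrict HX). intros x Hx. apply Hsplit. auto.
    + apply (IHb (fun q Hq => HP q (or_intror Hq)) n B1); auto; [lia|].
      apply (team_bisim_restrict HX). intros x Hx. apply Hsplit. auto.
  - intros [Ha|Hb].
    + left. apply (IHa (fun q Hq => HP q (or_introl Hq)) n X1); auto; lia.
    + right. apply (IHb (fun q Hq => HP q (or_intror Hq)) n X1); auto; lia.
  - destruct n as [|n]; [lia|].
    intros (Y1 & Hsucc & Hpred & Ha).
    destruct (team_bisim_dia HX Hsucc Hpred) as (Y2 & Hsucc2 & Hpred2 & HY).
    exists Y2. split; [|split]; auto.
    apply (IH HP n Y1); auto; lia.
  - destruct n as [|n]; [lia|].
    intros Ha. apply (IH HP n (post M1 X1)); auto; [lia|].
    exact (team_bisim_post HX).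
Qed.

End TeamBisimulation.

Section Amalgam.

Variables (M1 M2 : kmodel) (B : nat -> world M1 -> world M2 -> Prop) (P : letter -> Prop).

(* A world [inl (u, v, k)] pairs [k]-bisimilar worlds [u] and [v] and reads the
   letters of [P] from [v], all others from [u]; once [k] reaches 0 the amalgam
   continues as the copy [inr] of [M1]. *)
Definition amalgam_world : Type := ((world M1 * world M2 * nat) + world M1)%type.

Definition amalgam_rel (z z' : amalgam_world) : Prop :=
  match z, z' with
  | inl (u, v, S k), inl (u', v', k') => k' = k /\ rel M1 u u' /\ rel M2 v v' /\ B k u' v'
  | inl (u, _, 0), inr u' | inr u, inr u' => rel M1 u u'
  | _, _ => False
  end.

Definition amalgam_val (z : amalgam_world) (p : letter) : Prop :=
  match z with
  | inl (u, v, _) => (P p /\ val M2 v p) \/ (~ P p /\ val M1 u p)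
  | inr u => val M1 u p
  end.

Definition amalgam : kmodel := KModel amalgam_world amalgam_rel amalgam_val.

Definition amalgam_proj (_ : nat) (z : world amalgam) (u : world M1) : Prop :=
  match z with
  | inl (u0, v, k) => u0 = u /\ B k u v
  | inr u0 => u0 = u
  end.

Definition amalgam_emb (n : nat) (v : world M2) (z : world amalgam) : Prop :=
  exists u k, z = inl (u, v, k) /\ B k u v /\ n <= k.

Definition amalgam_team (n : nat) (X1 : world M1 -> Prop) (X2 : world M2 -> Prop) :
    world amalgam -> Prop :=
  fun z => exists u v, z = inl (u, v, n) /\ X1 u /\ X2 v /\ B n u v.

Lemma team_bisim_amalgam_proj n X1 X2 :
  team_bisim B n X1 X2 -> team_bisim amalgam_proj n (amalgam_team n X1 X2) X1.
Proof.
  intros [HX1 _]. split.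
  - intros z (u & v & -> & Hu & Hv & Huv). exists u. simpl. auto.
  - intros u Hu. destruct (HX1 u Hu) as [v [Hv Huv]].
    exists (inl (u, v, n)). split; [exists u, v|simpl]; auto.
Qed.

Lemma team_bisim_amalgam_emb n X1 X2 :
  team_bisim B n X1 X2 -> team_bisim amalgam_emb n X2 (amalgam_team n X1 X2).
Proof.
  intros [_ HX2]. split.
  - intros v Hv. destruct (HX2 v Hv) as [u [Hu Huv]].
    exists (inl (u, v, n)). split; [exists u, v|exists u, n]; auto.
  - intros z (u & v & -> & Hu & Hv & Huv). exists v. split; [|exists u, n]; auto.
Qed.

Variable Q : letter -> Prop.
Hypothesis HB : graded_bisim M1 M2 Q B.

Lemma graded_bisim_amalgam_proj (R : letter -> Prop) :
  (forall p, P p -> R p -> Q p) -> graded_bisim amalgam M1 R amalgam_proj.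
Proof.
  intros HPRQ. split.
  - intros n [[[u0 v] k]|u0] u p; simpl.
    + intros [<- Huv] Hp. destruct (classic (P p)) as [HPp|HPp].
      * pose proof (graded_bisim_val HB Huv (HPRQ p HPp Hp)). tauto.
      * tauto.
    + intros <-. tauto.
  - intros n [[[u0 v] [|k]]|u0] u [[[u1 v1] k1]|u1]; simpl; try tauto.
    + intros [<- _] Hu. eauto.
    + intros [<- _] (-> & Hu & _ & Hu1v1). eauto.
    + intros <- Hu. eauto.
  - intros n [[[u0 v] [|k]]|u0] u u'; simpl.
    + intros [<- _] Hu. exists (inr u'). simpl. auto.
    + intros [<- Huv] Hu. destruct (graded_bisim_forth HB Huv Hu) as [v' [Hv Hu'v']].
      exists (inl (u', v', k)). simpl. auto.
    + intros <- Hu. exists (inr u'). simpl. auto.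
Qed.

Lemma graded_bisim_amalgam_emb : graded_bisim M2 amalgam P amalgam_emb.
Proof.
  split.
  - intros n v z p (u & k & -> & _) Hp. simpl. tauto.
  - intros n v z v' (u & [|k] & -> & Huv & Hk) Hv; [lia|].
    destruct (graded_bisim_back HB Huv Hv) as [u' [Hu Hu'v']].
    exists (inl (u', v', k)). split; simpl; [auto|]. exists u', k. auto with arith.
  - intros n v z z' (u & [|k] & -> & Huv & Hk) Hz; [lia|].
    destruct z' as [[[u1 v1] k1]|u1]; simpl in Hz; [|contradiction].
    destruct Hz as (-> & _ & Hv & Hu1v1).
    exists v1. split; [|exists u1, k]; auto with arith.
Qed.

End Amalgam.

Definition single {M : kmodel} (w : world M) : world M -> Prop := fun y => y = w.

Definition flat (c : form) : Prop :=
  forall M (X : world M -> Prop), sat M c X <-> forall x, X x -> sat M c (single x).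

(* [FBot] only says that the team is empty, so the valid formula is [FBot \/ NE]
   and the unsatisfiable one (the empty disjunction below) is [FBot /\ NE]. *)
Definition top : form := FOr FBot FNE.

Fixpoint tensor_all (l : list form) : form :=
  match l with [] => FBot | a :: l => FTensor a (tensor_all l) end.

Fixpoint and_all (l : list form) : form :=
  match l with [] => top | a :: l => FAnd a (and_all l) end.

Fixpoint or_all (l : list form) : form :=
  match l with [] => FAnd FBot FNE | a :: l => FOr a (or_all l) end.

Fixpoint sublists (A : Type) (l : list A) : list (list A) :=
  match l with
  | [] => [[]]
  | a :: l => map (cons a) (sublists l) ++ sublists l
  end.

Fixpoint literal_conjs (ls : list letter) : list form :=
  match ls with
  | [] => [top]
  | q :: ls =>
      map (FAnd (FAtom q)) (literal_conjs ls) ++ map (FAnd (FNAtom q)) (literal_conjs ls)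
  end.

(* The type of a world whose literals are [l] and whose successors realize
   exactly the types in [T]. *)
Definition hintikka (l : form) (T : list form) : form :=
  FAnd l (FAnd (FBox (tensor_all T)) (and_all (map FDia T))).

Fixpoint types (ls : list letter) (k : nat) : list form :=
  match k with
  | 0 => literal_conjs ls
  | S k => flat_map (fun l => map (hintikka l) (sublists (types ls k))) (literal_conjs ls)
  end.

Definition exactly (S : list form) : form := tensor_all (map (fun t => FAnd t FNE) S).

Definition same_type (ls : list letter) {M1 M2 : kmodel} (k : nat)
    (x : world M1) (y : world M2) : Prop :=
  exists c, In c (types ls k) /\ sat M1 c (single x) /\ sat M2 c (single y).

Lemma in_sublists_incl (A : Type) (L T : list A) : In T (sublists L) -> incl T L.
Proof.
  revert T. induction L as [|a L IH]; simpl; intros T HT b Hb.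
  - destruct HT as [<-|[]]. contradiction.
  - apply in_app_iff in HT as [HT|HT].
    + apply in_map_iff in HT as [T' [<- HT']].
      destruct Hb as [<-|Hb]; [left|right]; auto. exact (IH T' HT' b Hb).
    + right. exact (IH T HT b Hb).
Qed.

Lemma sublists_filter (A : Type) (L : list A) (P : A -> Prop) :
  exists T, In T (sublists L) /\ forall a, In a T <-> In a L /\ P a.
Proof.
  induction L as [|a L [T [HT HTa]]]; simpl.
  - exists []. simpl. tauto.
  - destruct (classic (P a)) as [Ha|Ha].
    + exists (a :: T). split; [apply in_app_iff; left; apply in_map; auto|].
      intros b. simpl. rewrite HTa. split; [intros [<-|Hb]|intros [[<-|Hb] Pb]]; tauto.
    + exists T. split; [apply in_app_iff; auto|].
      intros b. rewrite HTa. split; [tauto|]. intros [[<-|Hb] Pb]; tauto.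
Qed.

Lemma sat_top M X : sat M top X.
Proof. simpl. destruct (classic (exists s, X s)); [right|left]; firstorder. Qed.

Lemma flat_top : flat top.
Proof. split; intros; apply sat_top. Qed.

Lemma flat_atom q : flat (FAtom q).
Proof.
  split; simpl.
  - intros H x Hx s ->. auto.
  - intros H s Hs. exact (H s Hs s eq_refl).
Qed.

Lemma flat_natom q : flat (FNAtom q).
Proof.
  split; simpl.
  - intros H x Hx s ->. auto.
  - intros H s Hs. exact (H s Hs s eq_refl).
Qed.

Lemma flat_and a b : flat a -> flat b -> flat (FAnd a b).
Proof.
  intros Ha Hb M X. simpl. rewrite (Ha M X), (Hb M X). firstorder.
Qed.

Lemma sat_and_all l M X : sat M (and_all l) X <-> forall a, In a l -> sat M a X.
Proof.
  induction l as [|a l IH]; simpl.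
  - split; [tauto|]. intros _. apply sat_top.
  - rewrite IH. firstorder congruence.
Qed.

Lemma sat_or_all l M X : sat M (or_all l) X <-> exists a, In a l /\ sat M a X.
Proof.
  induction l as [|a l IH]; simpl.
  - split; [|firstorder]. intros [Hbot [s Hs]]. destruct (Hbot s Hs).
  - rewrite IH. firstorder congruence.
Qed.

Lemma flat_and_all l : (forall a, In a l -> flat a) -> flat (and_all l).
Proof.
  induction l; simpl; intros H.
  - apply flat_top.
  - apply flat_and; auto.
Qed.

Lemma sat_tensor_all T M X : (forall t, In t T -> flat t) ->
  (sat M (tensor_all T) X <-> forall x, X x -> exists t, In t T /\ sat M t (single x)).
Proof.
  revert X. induction T as [|a T IH]; simpl; intros X HF.
  - firstorder.
  - pose proof (HF a (or_introl eq_refl)) as Fa. red in Fa. split.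
    + intros (X1 & X2 & Hsplit & H1 & H2) x Hx.
      rewrite Fa in H1. rewrite IH in H2 by auto.
      apply Hsplit in Hx as [Hx|Hx]; [exists a; auto|].
      destruct (H2 x Hx) as [t [? ?]]. eauto.
    + intros H. exists (fun x => X x /\ sat M a (single x)),
                  (fun x => X x /\ exists t, In t T /\ sat M t (single x)).
      rewrite Fa, IH by auto. split; [|split].
      * intros x. split; [|tauto]. intros Hx.
        destruct (H x Hx) as [t [[<-|Ht] Hs]]; [left|right]; eauto.
      * intros x [_ Hx]. exact Hx.
      * intros x [_ Hx]. exact Hx.
Qed.

Lemma sat_exactly S M X : (forall t, In t S -> flat t) ->
  (sat M (exactly S) X <->
   (forall x, X x -> exists t, In t S /\ sat M t (single x)) /\
   (forall t, In t S -> exists x, X x /\ sat M t (single x))).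
Proof.
  unfold exactly. revert X. induction S as [|a S IH]; simpl; intros X HF.
  - firstorder.
  - pose proof (HF a (or_introl eq_refl)) as Fa. red in Fa. split.
    + intros (X1 & X2 & Hsplit & [H1 [x1 Hx1]] & H2).
      rewrite IH in H2 by auto. destruct H2 as [H2a H2b]. rewrite Fa in H1. split.
      * intros x Hx. apply Hsplit in Hx as [Hx|Hx]; [exists a; auto|].
        destruct (H2a x Hx) as [t [? ?]]. eauto.
      * intros t [<-|Ht]; [exists x1; split; auto; apply Hsplit; auto|].
        destruct (H2b t Ht) as [x [Hx Hxt]]. exists x. split; auto. apply Hsplit. auto.
    + intros [Hcov Hreal]. exists (fun x => X x /\ sat M a (single x)),
                  (fun x => X x /\ exists t, In t S /\ sat M t (single x)).
      rewrite IH by auto. split; [|split; [split|split]].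
      * intros x. split; [|tauto]. intros Hx.
        destruct (Hcov x Hx) as [t [[<-|Ht] Hs]]; [left|right]; eauto.
      * rewrite Fa. intros x [_ Hx]. exact Hx.
      * destruct (Hreal a (or_introl eq_refl)) as [x Hx]. exists x. exact Hx.
      * intros x [_ Hx]. exact Hx.
      * intros t Ht. destruct (Hreal t (or_intror Ht)) as [x [? ?]]. eauto 6.
Qed.

Lemma sat_dia_flat t M X : flat t ->
  (sat M (FDia t) X <-> forall x, X x -> exists y, rel M x y /\ sat M t (single y)).
Proof.
  intros Ft. red in Ft. simpl. split.
  - intros (Y & Hsucc & _ & HY) x Hx. rewrite Ft in HY.
    destruct (Hsucc x Hx) as [y [? ?]]. eauto.
  - intros H. exists (fun y => exists x, X x /\ rel M x y /\ sat M t (single y)).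
    split; [|split].
    + intros x Hx. destruct (H x Hx) as [y [? ?]]. eauto 6.
    + intros y [x [? [? _]]]. eauto.
    + rewrite Ft. intros y [x [_ [_ ?]]]. auto.
Qed.

Lemma flat_dia t : flat t -> flat (FDia t).
Proof.
  intros Ft M X. rewrite sat_dia_flat by auto. split.
  - intros H x Hx. rewrite sat_dia_flat by auto. intros x0 ->. auto.
  - intros H x Hx. specialize (H x Hx). rewrite sat_dia_flat in H by auto. apply H. reflexivity.
Qed.

Lemma flat_box_tensor_all T : (forall t, In t T -> flat t) -> flat (FBox (tensor_all T)).
Proof.
  intros HF M X. simpl. rewrite sat_tensor_all by auto. split.
  - intros H x Hx. rewrite sat_tensor_all by auto.
    intros y [x0 [-> Hr]]. apply H. eauto.
  - intros H y [x [Hx Hr]]. specialize (H x Hx). rewrite sat_tensor_all in H by auto.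
    apply H. exists x. split; [reflexivity|auto].
Qed.

Lemma in_literal_conjs_cons q ls l :
  In l (literal_conjs (q :: ls)) <->
  exists l', In l' (literal_conjs ls) /\ (l = FAnd (FAtom q) l' \/ l = FAnd (FNAtom q) l').
Proof.
  simpl. rewrite in_app_iff, !in_map_iff. firstorder.
Qed.

Lemma flat_literal_conjs ls l : In l (literal_conjs ls) -> flat l.
Proof.
  revert l. induction ls as [|q ls IH]; intros l Hl.
  - destruct Hl as [<-|[]]. apply flat_top.
  - apply in_literal_conjs_cons in Hl as [l' [Hl' [-> | ->]]];
      apply flat_and; auto using flat_atom, flat_natom.
Qed.

Lemma in_types_S ls k c :
  In c (types ls (S k)) <->
  exists l T, In l (literal_conjs ls) /\ In T (sublists (types ls k)) /\ c = hintikka l T.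
Proof.
  simpl. rewrite in_flat_map. split.
  - intros [l [Hl Hc]]. apply in_map_iff in Hc as [T [<- HT]]. eauto.
  - intros (l & T & Hl & HT & ->). exists l. split; auto. apply in_map. auto.
Qed.

Lemma flat_types ls k c : In c (types ls k) -> flat c.
Proof.
  revert c. induction k as [|k IH]; intros c Hc.
  - exact (flat_literal_conjs Hc).
  - apply in_types_S in Hc as (l & T & Hl & HT & ->).
    assert (FT : forall t, In t T -> flat t) by (intros t Ht; apply IH, (in_sublists_incl HT), Ht).
    apply flat_and; [exact (flat_literal_conjs Hl)|apply flat_and].
    + apply flat_box_tensor_all. exact FT.
    + apply flat_and_all. intros a Ha. apply in_map_iff in Ha as [t [<- Ht]].
      apply flat_dia. auto.
Qed.

Lemma flat_sublist_types ls k T : In T (sublists (types ls k)) -> forall t, In t T -> flat t.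
Proof. intros HT t Ht. exact (flat_types (in_sublists_incl HT Ht)). Qed.

Lemma literal_conjs_cover ls M (w : world M) :
  exists l, In l (literal_conjs ls) /\ sat M l (single w).
Proof.
  induction ls as [|q ls [l [Hl Hw]]].
  - exists top. split; [left; auto|apply sat_top].
  - destruct (classic (val M w q)) as [Hq|Hq];
      [exists (FAnd (FAtom q) l)|exists (FAnd (FNAtom q) l)];
      (split; [apply in_literal_conjs_cons; eauto|split; auto]);
      simpl; intros s ->; exact Hq.
Qed.

Lemma types_cover ls k M w : exists c, In c (types ls k) /\ sat M c (single w).
Proof.
  revert w. induction k as [|k IH]; intros w.
  - apply literal_conjs_cover.
  - destruct (literal_conjs_cover ls w) as [l [Hl Hw]].
    destruct (sublists_filter (types ls k) (fun c => exists y, rel M w y /\ sat M c (single y)))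
      as [T [HT HTa]].
    pose proof (flat_sublist_types HT) as FT.
    exists (hintikka l T). split; [apply in_types_S; eauto|].
    split; [exact Hw|split].
    + simpl. rewrite sat_tensor_all by auto. intros y [x0 [-> Hr]].
      destruct (IH y) as [c [Hc Hcy]]. exists c. split; auto. apply HTa. eauto.
    + rewrite sat_and_all. intros a Ha. apply in_map_iff in Ha as [t [<- Ht]].
      rewrite sat_dia_flat by auto. intros x0 ->.
      apply HTa in Ht as [_ [y [? ?]]]. eauto.
Qed.

Lemma literal_conjs_val ls l q M1 M2 (x : world M1) (y : world M2) :
  In l (literal_conjs ls) -> In q ls -> sat M1 l (single x) -> sat M2 l (single y) ->
  (val M1 x q <-> val M2 y q).
Proof.
  revert l. induction ls as [|q0 ls IH]; intros l Hl Hq; [destruct Hq|].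
  apply in_literal_conjs_cons in Hl as [l' [Hl' [-> | ->]]];
    intros [Hx Hx'] [Hy Hy']; simpl in Hx, Hy.
  - destruct Hq as [<-|Hq]; [|eauto]. split; intros; [apply Hy|apply Hx]; reflexivity.
  - destruct Hq as [<-|Hq]; [|eauto].
    specialize (Hx x eq_refl). specialize (Hy y eq_refl). tauto.
Qed.

Lemma hintikka_succ l T M1 M2 (x : world M1) (y : world M2) x' :
  (forall t, In t T -> flat t) ->
  sat M1 (hintikka l T) (single x) -> sat M2 (hintikka l T) (single y) -> rel M1 x x' ->
  exists y' t, rel M2 y y' /\ In t T /\ sat M1 t (single x') /\ sat M2 t (single y').
Proof.
  intros FT [_ [Hbox _]] [_ [_ Hdia]] Hxx'. simpl in Hbox.
  rewrite sat_tensor_all in Hbox by auto.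
  destruct (Hbox x') as [t [Ht Hx't]]; [exists x; split; [reflexivity|auto]|].
  rewrite sat_and_all in Hdia. specialize (Hdia (FDia t) (in_map _ _ _ Ht)).
  rewrite sat_dia_flat in Hdia by auto. destruct (Hdia y eq_refl) as [y' [? ?]].
  exists y', t. auto.
Qed.

Lemma graded_bisim_same_type ls M1 M2 :
  graded_bisim M1 M2 (fun p => In p ls) (same_type ls).
Proof.
  split.
  - intros [|k] x y p (c & Hc & Hx & Hy) Hp.
    + exact (literal_conjs_val Hc Hp Hx Hy).
    + apply in_types_S in Hc as (l & T & Hl & _ & ->).
      exact (literal_conjs_val Hl Hp (proj1 Hx) (proj1 Hy)).
  - intros k x y x' (c & Hc & Hx & Hy) Hxx'.
    apply in_types_S in Hc as (l & T & Hl & HT & ->).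
    destruct (hintikka_succ (flat_sublist_types HT) Hx Hy Hxx') as (y' & t & ? & Ht & ? & ?).
    exists y'. split; auto. exists t. split; auto. exact (in_sublists_incl HT Ht).
  - intros k x y y' (c & Hc & Hx & Hy) Hyy'.
    apply in_types_S in Hc as (l & T & Hl & HT & ->).
    destruct (hintikka_succ (flat_sublist_types HT) Hy Hx Hyy') as (x' & t & ? & Ht & ? & ?).
    exists x'. split; auto. exists t. split; auto. exact (in_sublists_incl HT Ht).
Qed.

Lemma letters_tensor_all T q : letters (tensor_all T) q -> exists t, In t T /\ letters t q.
Proof. induction T; simpl; firstorder. Qed.

Lemma letters_and_all T q : letters (and_all T) q -> exists t, In t T /\ letters t q.
Proof. induction T; simpl; firstorder. Qed.

Lemma letters_or_all T q : letters (or_all T) q -> exists t, In t T /\ letters t q.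
Proof. induction T; simpl; firstorder. Qed.

Lemma letters_literal_conjs ls l q : In l (literal_conjs ls) -> letters l q -> In q ls.
Proof.
  revert l. induction ls as [|q0 ls IH]; intros l Hl Hq.
  - destruct Hl as [<-|[]]. simpl in Hq. tauto.
  - apply in_literal_conjs_cons in Hl as [l' [Hl' [-> | ->]]];
      simpl in Hq; (destruct Hq as [<-|Hq]; [left|right]; eauto).
Qed.

Lemma letters_types ls k c q : In c (types ls k) -> letters c q -> In q ls.
Proof.
  revert c. induction k as [|k IH]; intros c Hc Hq.
  - exact (letters_literal_conjs Hc Hq).
  - apply in_types_S in Hc as (l & T & Hl & HT & ->).
    destruct Hq as [Hq|[Hq|Hq]].
    + exact (letters_literal_conjs Hl Hq).
    + apply letters_tensor_all in Hq as [t [Ht Hq]]. exact (IH t (in_sublists_incl HT Ht) Hq).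
    + apply letters_and_all in Hq as [t [Ht Hq]]. apply in_map_iff in Ht as [t' [<- Ht']].
      exact (IH t' (in_sublists_incl HT Ht') Hq).
Qed.

Lemma team_bisim_exactly ls k S M1 M2 (X1 : world M1 -> Prop) (X2 : world M2 -> Prop) :
  In S (sublists (types ls k)) -> sat M1 (exactly S) X1 -> sat M2 (exactly S) X2 ->
  team_bisim (same_type ls) k X1 X2.
Proof.
  intros HS H1 H2. pose proof (flat_sublist_types HS) as FS.
  rewrite sat_exactly in H1, H2 by auto.
  destruct H1 as [Hcov1 Hreal1], H2 as [Hcov2 Hreal2]. split.
  - intros x Hx. destruct (Hcov1 x Hx) as [t [Ht Hxt]].
    destruct (Hreal2 t Ht) as [y [Hy Hyt]].
    exists y. split; auto. exists t. split; auto. exact (in_sublists_incl HS Ht).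
  - intros y Hy. destruct (Hcov2 y Hy) as [t [Ht Hyt]].
    destruct (Hreal1 t Ht) as [x [Hx Hxt]].
    exists x. split; auto. exists t. split; auto. exact (in_sublists_incl HS Ht).
Qed.

Section Interpolant.

Variables (phi : form) (ls : list letter) (Sel : list (list form)).

Definition realizable (S : list form) : Prop :=
  exists M (X : world M -> Prop), sat M phi X /\ sat M (exactly S) X.

Hypothesis HSel : forall S, In S Sel <-> In S (sublists (types ls (depth phi))) /\ realizable S.

Definition interpolant : form := or_all (map exactly Sel).

Lemma entails_interpolant : entails phi interpolant.
Proof.
  intros M X Hphi. apply sat_or_all.
  destruct (sublists_filter (types ls (depth phi)) (fun t => exists x, X x /\ sat M t (single x)))
    as [T [HT HTa]].
  assert (HX : sat M (exactly T) X).
  { rewrite sat_exactly by exact (flat_sublist_types HT). split.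
    - intros x Hx. destruct (types_cover ls (depth phi) x) as [c [Hc Hxc]].
      exists c. split; auto. apply HTa. eauto.
    - intros t Ht. apply HTa in Ht. tauto. }
  exists (exactly T). split; auto. apply in_map, HSel. split; [exact HT|]. exists M, X. auto.
Qed.

Lemma letters_interpolant q : letters interpolant q -> In q ls.
Proof.
  intros Hq. apply letters_or_all in Hq as [a [Ha Hq]].
  apply in_map_iff in Ha as [S [<- HS]]. apply HSel in HS as [HS _].
  apply letters_tensor_all in Hq as [b [Hb Hq]].
  apply in_map_iff in Hb as [t [<- Ht]]. destruct Hq as [Hq|[]].
  exact (letters_types (in_sublists_incl HS Ht) Hq).
Qed.

Lemma interpolant_entails psi :
  entails phi psi -> (forall q, letters phi q -> letters psi q -> In q ls) ->
  entails interpolant psi.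
Proof.
  intros Hpsi Hcommon M X Hint.
  apply sat_or_all in Hint as [a [Ha HX]].
  apply in_map_iff in Ha as [S [<- HS]].
  apply HSel in HS as [HS (M' & X' & Hphi & HX')].
  pose proof (team_bisim_exactly HS HX HX') as HXX'.
  pose proof (graded_bisim_same_type ls M M') as Htype.
  assert (HZ : sat (amalgam (@same_type ls M M') (letters phi)) phi
                   (amalgam_team (depth phi) X X'))
    by exact (sat_team_bisim (graded_bisim_amalgam_emb (letters phi) Htype) (phi := phi)
                (fun q Hq => Hq) (le_n _) (team_bisim_amalgam_emb (letters phi) HXX') Hphi).
  apply (sat_team_bisim (graded_bisim_amalgam_proj Htype Hcommon) (phi := psi)
           (fun q Hq => Hq) (le_n _) (team_bisim_amalgam_proj (letters phi) HXX')).
  apply Hpsi. exact HZ.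
Qed.

End Interpolant.

Fixpoint letter_list (f : form) : list letter :=
  match f with
  | FAtom p | FNAtom p => [p]
  | FBot | FNE => []
  | FAnd a b | FTensor a b | FOr a b => letter_list a ++ letter_list b
  | FDia a | FBox a => letter_list a
  end.

Lemma in_letter_list f q : In q (letter_list f) <-> letters f q.
Proof.
  induction f; simpl; rewrite ?in_app_iff; firstorder congruence.
Qed.

Lemma filter_exists (A : Type) (L : list A) (P : A -> Prop) :
  exists T, forall a, In a T <-> In a L /\ P a.
Proof. destruct (sublists_filter L P) as [T [_ HT]]. eauto. Qed.

Theorem mainTheorem10 :
  forall (phi : form) (L' : letter -> Prop),
    (forall q, L' q -> letters phi q) ->
    exists theta : form,
      entails phi theta /\
      (forall q, letters theta q -> L' q) /\
      (forall psi : form,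
         entails phi psi ->
         (forall q, letters phi q -> letters psi q -> L' q) ->
         entails theta psi).
Proof.
  intros phi L' HL'.
  destruct (filter_exists (letter_list phi) L') as [ls Hls].
  assert (HlsL' : forall q, In q ls <-> L' q).
  { intros q. rewrite Hls, in_letter_list. split; [tauto|auto]. }
  destruct (filter_exists (sublists (types ls (depth phi))) (realizable phi)) as [Sel HSel].
  exists (interpolant Sel). split; [|split].
  - exact (entails_interpolant HSel).
  - intros q Hq. apply HlsL'. exact (letters_interpolant HSel Hq).
  - intros psi Hpsi Hcommon. apply (interpolant_entails HSel Hpsi).
    intros q Hphi Hpsi'. apply HlsL'. auto.
Qed.
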